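(* Let $\alpha,\beta,\gamma\in\mathbb{Z}_2^n$ and $a,b,c\in\mathbb{Z}_2$. Then (1) $\mathrm{cadp}_c(\alpha,\beta,\gamma)=\mathrm{cadp}_c(\beta,\alpha,\gamma)=\mathrm{cadp}_c(\alpha+2^{n-1},\beta+2^{n-1},\gamma)$; (2) $\mathrm{cadp}_c(\alpha,\beta,\gamma)=\mathrm{cadp}_c(-\alpha,\beta,\gamma)=\mathrm{cadp}_c(\alpha,-\beta,\gamma)$; (3) $\mathrm{cadp}_c(\alpha,\beta,\gamma)=\mathrm{cadp}_{c\oplus1}(\alpha,\beta,-\gamma)$ if $\gamma\neq0$; (4) $\mathrm{padp}_{a,b}(\alpha,\beta,\gamma)=\mathrm{padp}_{a,b}(\alpha,\beta,-\gamma)$; (5) $\mathrm{padp}_{a,b}(-\alpha,\beta,\gamma)=\mathrm{padp}_{a\oplus1,b}(\alpha,\beta,\gamma)$ if $\alpha\ne0$; (6) $\mathrm{padp}_{a,b}(\alpha,-\beta,\gamma)=\mathrm{padp}_{a,b\oplus1}(\alpha,\beta,\gamma)$ if $\beta\ne0$; (7) $\mathrm{padp}_{1,b}(0,\beta,\gamma)=\mathrm{padp}_{a,1}(\alpha,0,\gamma)=\mathrm{cadp}_1(\alpha,\beta,0)=0$.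
   Context: For $x\in\mathbb{Z}_2^n$, $x=(x_0,\dots,x_{n-1})$ is identified with the integer $\sum_i x_i2^{n-1-i}$ ($x_0$ most significant); $+$ and $-$ are modulo $2^n$. Indices $0,\dots,7$ are identified with $\mathbb{Z}_2^3$ via $(p_0,p_1,p_2)\leftrightarrow4p_0+2p_1+p_2$; $e_0,\dots,e_7$ are the standard basis row vectors of $\mathbb{Q}^8$. $A_0$ is $\frac14$ times the $8\times8$ matrix with rows $(4,0,0,1,0,1,1,0)$, $(0,0,0,1,0,1,0,0)$, $(0,0,0,1,0,0,1,0)$, $(0,0,0,1,0,0,0,0)$, $(0,0,0,0,0,1,1,0)$, $(0,0,0,0,0,1,0,0)$, $(0,0,0,0,0,0,1,0)$, $(0,\dots,0)$, and $(A_k)_{i,j}=(A_0)_{i\oplus k,j\oplus k}$. For $\alpha,\beta,\gamma\in\mathbb{Z}_2^n$ let $\omega_i=4\alpha_i+2\beta_i+\gamma_i$. With $L_0=(1,0,1,0,1,0,1,0)$, $L_1=(0,1,0,1,0,1,0,1)$, $L_{0,0}=(1,1,0,0,0,0,0,0)$, $L_{0,1}=(0,0,1,1,0,0,0,0)$, $L_{1,0}=(0,0,0,0,1,1,0,0)$, $L_{1,1}=(0,0,0,0,0,0,1,1)$, define $\mathrm{cadp}_c(\alpha,\beta,\gamma)=L_cA_{\omega_0}\cdots A_{\omega_{n-1}}e_0^T$ and $\mathrm{padp}_{a,b}(\alpha,\beta,\gamma)=L_{a,b}A_{\omega_0}\cdots A_{\omega_{n-1}}e_0^T$. *)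

From mathcomp Require Import all_boot all_order all_algebra.
Set Implicit Arguments. Unset Strict Implicit. Unset Printing Implicit Defensive.
Import Order.TTheory GRing.Theory Num.Theory.
Local Open Scope ring_scope.

(* Elements of Z_2^n are represented by their integer value x in 'I_(2^n),
   x = \sum_i x_i 2^(n-1-i); arithmetic is modulo 2^n. *)
Lemma pow2_gt0 (n : nat) : (0 < 2 ^ n)%N.
Proof. by rewrite expn_gt0. Qed.

Definition zmod (n k : nat) : 'I_(2 ^ n) := Ordinal (ltn_pmod k (pow2_gt0 n)).
Definition zadd (n : nat) (x y : 'I_(2 ^ n)) : 'I_(2 ^ n) := zmod n (x + y).
Definition zopp (n : nat) (x : 'I_(2 ^ n)) : 'I_(2 ^ n) := zmod n (2 ^ n - x).
Definition zero (n : nat) : 'I_(2 ^ n) := zmod n 0.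

Definition xbit (n : nat) (x : 'I_(2 ^ n)) (i : nat) : nat :=
  odd (x %/ 2 ^ (n.-1 - i)).

Definition A0rows : seq (seq nat) :=
  [:: [:: 4; 0; 0; 1; 0; 1; 1; 0];
      [:: 0; 0; 0; 1; 0; 1; 0; 0];
      [:: 0; 0; 0; 1; 0; 0; 1; 0];
      [:: 0; 0; 0; 1; 0; 0; 0; 0];
      [:: 0; 0; 0; 0; 0; 1; 1; 0];
      [:: 0; 0; 0; 0; 0; 1; 0; 0];
      [:: 0; 0; 0; 0; 0; 0; 1; 0];
      [:: 0; 0; 0; 0; 0; 0; 0; 0] ]%N.

Definition A0 : 'M[rat]_8 :=
  \matrix_(i < 8, j < 8) ((nth 0 (nth [::] A0rows i) j)%:R / 4).

Definition xor8 (i k : 'I_8) : 'I_8 := inord (Nat.lxor i k).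

Definition Amat (k : 'I_8) : 'M[rat]_8 :=
  \matrix_(i < 8, j < 8) A0 (xor8 i k) (xor8 j k).

Definition omega (n : nat) (al be ga : 'I_(2 ^ n)) (i : nat) : 'I_8 :=
  inord (4 * xbit al i + 2 * xbit be i + xbit ga i).

Definition Aprod (n : nat) (al be ga : 'I_(2 ^ n)) : 'M[rat]_8 :=
  \prod_(i < n) Amat (omega al be ga i).

Definition rowvec (s : seq nat) : 'rV[rat]_8 := \row_(j < 8) (nth 0 s j)%:R.

Definition Lc (c : bool) : 'rV[rat]_8 :=
  if c then rowvec [:: 0; 1; 0; 1; 0; 1; 0; 1]%N
  else rowvec [:: 1; 0; 1; 0; 1; 0; 1; 0]%N.

Definition Lab (a b : bool) : 'rV[rat]_8 :=
  match a, b with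
  | false, false => rowvec [:: 1; 1; 0; 0; 0; 0; 0; 0]%N
  | false, true  => rowvec [:: 0; 0; 1; 1; 0; 0; 0; 0]%N
  | true, false  => rowvec [:: 0; 0; 0; 0; 1; 1; 0; 0]%N
  | true, true   => rowvec [:: 0; 0; 0; 0; 0; 0; 1; 1]%N
  end.

Definition e0T : 'cV[rat]_8 := \col_(i < 8) (if i == 0 :> nat then 1 else 0).

Definition cadp (n : nat) (c : bool) (al be ga : 'I_(2 ^ n)) : rat :=
  (Lc c *m Aprod al be ga *m e0T) 0 0.

Definition padp (n : nat) (a b : bool) (al be ga : 'I_(2 ^ n)) : rat :=
  (Lab a b *m Aprod al be ga *m e0T) 0 0.

(* The eight matrices are conjugate under the permutation matrices P_t of
   i |-> i xor t: A_(k xor t) = P_t A_k P_t.  Complementing the alpha-, beta- or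
   gamma-digit of a letter therefore conjugates that factor of the product by
   P_4, P_2 or P_1.  The binary digits of -x agree with those of x up to and
   including its lowest set bit and are complemented above it.  The factors
   below that bit keep e_0 among the vectors supported on indices whose digit
   is clear, and the factor at that bit makes such a vector P-invariant; hence
   the product for -x applied to e_0 is P times the product for x.  Every
   identity of the theorem then reduces to how L_c and L_(a,b) transform under
   P_t (or vanish on those supports, for zero arguments), to the symmetry of
   A_0 under exchanging the alpha- and beta-digits, and (for the top bit) to
   L_c A_(k xor 6) = L_c A_k: finitely many facts about explicit 8 x 8
   matrices, checked by computation. *)

From mathcomp Require Import all_boot all_order all_algebra fingroup perm.
From Stdlib Require PeanoNat.
Set Implicit Arguments.
Unset Strict Implicit.
Unset Printing Implicit Defensive.
Import GRing.Theory.
Local Open Scope ring_scope.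

Definition bit (m x : nat) : bool := odd (x %/ 2 ^ m).

Lemma bit_modn m n x : (m < n)%N -> bit m (x %% 2 ^ n) = bit m x.
Proof.
move=> lt_mn; have le_mn := ltnW lt_mn.
rewrite /bit divn_modl ?dvdn_exp2l // -expnB // odd_mod // oddX subn_eq0.
by rewrite leqNgt lt_mn.
Qed.

Lemma modn_pow2S x n : (x %% 2 ^ n.+1 = bit n x * 2 ^ n + x %% 2 ^ n)%N.
Proof.
rewrite {1}(divn_eq (x %% 2 ^ n.+1) (2 ^ n)) expnS mulnC -modn_divl modn2.
by rewrite modn_dvdm ?dvdn_mull // mulnC.
Qed.

Lemma modn_pow2S_eq0 x n :
  (x %% 2 ^ n.+1 == 0)%N = ~~ bit n x && (x %% 2 ^ n == 0)%N.
Proof. by rewrite modn_pow2S addn_eq0 muln_eq0 expn_eq0 orbF; case: bit. Qed.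

Lemma bit_addn_pow k m x : (k <= m)%N -> bit k (x + 2 ^ m) = (k == m) (+) bit k x.
Proof.
move=> le_km; rewrite /bit divnDr ?dvdn_exp2l // -expnB // oddD oddX subn_eq0.
by rewrite eqn_leq le_km orbF addbC.
Qed.

Lemma carry_opp d x x' : (0 < d)%N -> ((x + x') %% d = 0)%N ->
  (d <= x %% d + x' %% d)%N = (x %% d != 0)%N.
Proof.
move=> d_gt0 sum0; have [r0 | r_neq0] := eqVneq (x %% d)%N 0%N.
  by rewrite r0 add0n leqNgt ltn_pmod.
apply: dvdn_leq; first by rewrite addn_gt0 lt0n r_neq0.
by rewrite /dvdn modnDm sum0.
Qed.

Lemma bit_opp n x x' : ((x + x') %% 2 ^ n.+1 = 0)%N ->
  bit n x' = (x %% 2 ^ n != 0)%N (+) bit n x.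
Proof.
move=> /eqP; rewrite modn_pow2S_eq0 => /andP[].
rewrite /bit divnD ?expn_gt0 // => + /eqP low0.
rewrite carry_opp ?expn_gt0 // !oddD oddb.
by case: (odd (x %/ 2 ^ n)) (odd (x' %/ 2 ^ n)) (x %% 2 ^ n != 0)%N => [] [] [].
Qed.

Section Words.

Variables (R : pzRingType) (d : nat).

(* [word_of n u] is [u (n-1) * ... * u 0]: with [u m] built from the digits of
   weight 2^m, this is the paper's A_(omega_0) ... A_(omega_(n-1)). *)
Definition word_of (n : nat) (u : nat -> 'M[R]_d.+1) : 'M[R]_d.+1 :=
  \prod_(i < n) u (n.-1 - i)%N.

Lemma word_of0 u : word_of 0 u = 1%:M.
Proof. by rewrite /word_of big_ord0. Qed.

Lemma word_ofS n u : word_of n.+1 u = u n *m word_of n u.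
Proof.
rewrite /word_of big_ord_recl subn0; congr (_ * _).
by apply: eq_bigr => i _; rewrite /= subnS predn_sub.
Qed.

Lemma eq_word_of n u v : (forall m, m < n -> u m = v m)%N -> word_of n u = word_of n v.
Proof.
move=> uv; apply: eq_bigr => i _; apply: uv.
by case: n i => [[]|n i] //; rewrite ltnS leq_subr.
Qed.

Lemma word_of_conj n u (P : 'M[R]_d.+1) : P *m P = 1%:M ->
  word_of n (fun m => P *m u m *m P) = P *m word_of n u *m P.
Proof.
move=> PK; elim: n => [|n IHn]; first by rewrite !word_of0 mulmx1.
by rewrite !word_ofS IHn !mulmxA -[_ *m P *m P]mulmxA PK mulmx1.
Qed.

Definition bit_word (F : nat -> bool -> 'M[R]_d.+1) (n x : nat) : 'M[R]_d.+1 :=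
  word_of n (fun m => F m (bit m x)).

Lemma bit_wordS F n x : bit_word F n.+1 x = F n (bit n x) *m bit_word F n x.
Proof. exact: word_ofS. Qed.

Lemma bit_word_mod F n x : bit_word F n (x %% 2 ^ n) = bit_word F n x.
Proof. by apply: eq_word_of => m lt_mn; rewrite bit_modn. Qed.

Section Opposite.

Variables (F : nat -> bool -> 'M[R]_d.+1) (P D : 'M[R]_d.+1) (e : 'cV[R]_d.+1).
Hypotheses (PK : P *m P = 1%:M) (De : D *m e = e).
Hypothesis F_flip : forall m b, F m (~~ b) = P *m F m b *m P.
Hypothesis F_clear : forall m, D *m F m false *m D = F m false *m D.
Hypothesis F_sym : forall m, P *m F m true *m D = F m true *m D.

Lemma bit_word_clear n x : (x %% 2 ^ n = 0)%N ->
  D *m (bit_word F n x *m e) = bit_word F n x *m e.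
Proof.
elim: n x => [|n IHn] x; first by rewrite /bit_word word_of0 mul1mx.
move=> /eqP; rewrite modn_pow2S_eq0 bit_wordS => /andP[/negbTE -> /eqP low0].
by rewrite -!mulmxA -(IHn x low0) !mulmxA F_clear.
Qed.

Lemma bit_word_opp n x x' : ((x + x') %% 2 ^ n = 0)%N -> (x %% 2 ^ n != 0)%N ->
  bit_word F n x' *m e = P *m (bit_word F n x *m e).
Proof.
elim: n x x' => [|n IHn] x x' sum0; first by rewrite expn0 modn1.
have /andP[_ /eqP low_sum0] : ~~ bit n (x + x') && ((x + x') %% 2 ^ n == 0)%N.
  by rewrite -modn_pow2S_eq0 sum0.
rewrite !bit_wordS (bit_opp sum0) -!mulmxA.
have [low0 | low_neq0] := eqVneq (x %% 2 ^ n)%N 0%N => /= x_neq0.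
  have top1 : bit n x by move: x_neq0; rewrite modn_pow2S_eq0 low0 eqxx andbT negbK.
  have low'0 : (x' %% 2 ^ n = 0)%N by move: low_sum0; rewrite -modnDm low0 add0n modn_mod.
  have -> : bit_word F n x' = bit_word F n x.
    by rewrite -bit_word_mod low'0 -[RHS]bit_word_mod low0.
  by rewrite top1 -(bit_word_clear low0) !mulmxA F_sym.
by rewrite F_flip (IHn x x') // !mulmxA -[P *m _ *m P *m P]mulmxA PK mulmx1.
Qed.

End Opposite.
End Words.

Section InvolutionMatrices.

Variables (R : pzRingType) (n : nat).

Definition invol_perm (f : 'I_n -> 'I_n) (fK : involutive f) : 'S_n := perm (can_inj fK).

Definition invol_mx f (fK : involutive f) : 'M[R]_n := perm_mx (invol_perm fK).

Definition proj_mx (S : pred 'I_n) : 'M[R]_n := diag_mx (\row_i (S i)%:R).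

Variables (f : 'I_n -> 'I_n) (fK : involutive f) (S : pred 'I_n).
Local Notation P := (invol_mx fK).
Local Notation D := (proj_mx S).

Lemma invol_permV : ((invol_perm fK)^-1)%g = invol_perm fK.
Proof.
apply/permP => i; apply: (@perm_inj _ (invol_perm fK)).
by rewrite permKV !permE fK.
Qed.

Lemma invol_mxK : P *m P = 1%:M.
Proof. by rewrite -perm_mxM -{1}invol_permV mulVg perm_mx1. Qed.

Lemma invol_mx_conj (A B : 'M[R]_n) :
  (forall i j, B i j = A (f i) (f j)) -> B = P *m A *m P.
Proof.
move=> BE; rewrite {2}/invol_mx -invol_permV -row_permE -col_permE.
by apply/matrixP => i j; rewrite !mxE !permE BE.
Qed.

Lemma row_invol_mx (L L' : 'rV[R]_n) : (forall j, L' 0 j = L 0 (f j)) -> L *m P = L'.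
Proof.
move=> LE; rewrite /invol_mx -invol_permV -col_permE.
by apply/matrixP => i j; rewrite !mxE permE ord1 LE.
Qed.

Lemma invol_mx_col (v v' : 'cV[R]_n) : (forall i, v' i 0 = v (f i) 0) -> P *m v = v'.
Proof.
move=> vE; rewrite -row_permE.
by apply/matrixP => i j; rewrite !mxE permE ord1 vE.
Qed.

Lemma proj_mx_stable (A : 'M[R]_n) :
  (forall i j, ~~ S i -> S j -> A i j = 0) -> D *m A *m D = A *m D.
Proof.
move=> A0; apply/matrixP => i j; rewrite !mul_mx_diag mul_diag_mx !mxE.
case: (boolP (S j)) => Sj; last by rewrite mulr0n !mulr0.
by case: (boolP (S i)) => Si; rewrite ?mul1r // A0 // !mulr0n !mul0r.
Qed.

Lemma invol_proj_mx (A : 'M[R]_n) :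
  (forall i j, S j -> A (f i) j = A i j) -> P *m A *m D = A *m D.
Proof.
move=> Asym; apply/matrixP => i j; rewrite !mul_mx_diag -row_permE !mxE permE.
by case: (boolP (S j)) => Sj; rewrite ?mulr0n ?mulr0 // Asym.
Qed.

Lemma proj_mx_col (v : 'cV[R]_n) : (forall i, ~~ S i -> v i 0 = 0) -> D *m v = v.
Proof.
move=> v0; apply/matrixP => i j; rewrite mul_diag_mx !mxE ord1.
by case: (boolP (S i)) => Si; rewrite ?mul1r // v0 // mulr0.
Qed.

Lemma row_proj_mx (L : 'rV[R]_n) : (forall i, S i -> L 0 i = 0) -> L *m D = 0.
Proof.
move=> L0; apply/matrixP => i j; rewrite mul_mx_diag !mxE ord1.
by case: (boolP (S j)) => Sj; rewrite ?mulr0n ?mulr0 // L0 // mul0r.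
Qed.

End InvolutionMatrices.

(* Facts about the explicit matrices are checked on [nat] indices, where they
   compute ([inord] and [\matrix_] do not), and transferred by [all8P]. *)
Definition all8 (P : pred nat) : bool := all P (iota 0 8).

Lemma all8P (P : pred nat) : all8 P -> forall i : 'I_8, P i.
Proof. by move=> /allP PP i; apply: PP; rewrite mem_iota ltn_ord. Qed.

Lemma all8P2 (P : nat -> nat -> bool) :
  all8 (fun i => all8 (P i)) -> forall i j : 'I_8, P i j.
Proof. by move=> /all8P PP i; apply/all8P/PP. Qed.

Lemma all8P3 (P : nat -> nat -> nat -> bool) :
  all8 (fun k => all8 (fun i => all8 (P k i))) -> forall k i j : 'I_8, P k i j.
Proof. by move=> /all8P PP k; apply/all8P2/PP. Qed.

Lemma xor8E (i k : 'I_8) : xor8 i k = Nat.lxor i k :> nat.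
Proof. by rewrite inordK //; move: i k; apply: (@all8P2 (fun i k => Nat.lxor i k < 8)%N). Qed.

Lemma xor8_inordE t : (t < 8)%N -> forall i : 'I_8, xor8 i (inord t) = Nat.lxor i t :> nat.
Proof. by move=> lt_t8 i; rewrite xor8E inordK. Qed.

Lemma xor8K (t : 'I_8) : involutive (xor8 ^~ t).
Proof.
move=> i; apply: val_inj; rewrite /= !xor8E PeanoNat.Nat.lxor_assoc.
by rewrite PeanoNat.Nat.lxor_nilpotent PeanoNat.Nat.lxor_0_r.
Qed.

Definition letter (x y z : bool) : 'I_8 := inord (4 * x + 2 * y + z).

Lemma letterE x y z : letter x y z = (4 * x + 2 * y + z)%N :> nat.
Proof. by rewrite inordK //; case: x; case: y; case: z. Qed.

Lemma bit2_letter x y z : bit 2 (letter x y z) = x.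
Proof. by rewrite letterE; case: x; case: y; case: z. Qed.

Lemma bit1_letter x y z : bit 1 (letter x y z) = y.
Proof. by rewrite letterE; case: x; case: y; case: z. Qed.

Lemma bit0_letter x y z : bit 0 (letter x y z) = z.
Proof. by rewrite letterE; case: x; case: y; case: z. Qed.

Lemma letter_bits (i : 'I_8) : letter (bit 2 i) (bit 1 i) (bit 0 i) = i.
Proof.
apply: val_inj; rewrite /= letterE; apply/eqP; move: i.
by apply: (@all8P (fun i => 4 * bit 2 i + 2 * bit 1 i + bit 0 i == i)%N).
Qed.

Definition mask (j : nat) : 'I_8 := inord (2 ^ j).

Lemma letterNa x y z : letter (~~ x) y z = xor8 (letter x y z) (mask 2).
Proof. by apply: val_inj; rewrite /= xor8_inordE // !letterE; case: x; case: y; case: z. Qed.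

Lemma letterNb x y z : letter x (~~ y) z = xor8 (letter x y z) (mask 1).
Proof. by apply: val_inj; rewrite /= xor8_inordE // !letterE; case: x; case: y; case: z. Qed.

Lemma letterNg x y z : letter x y (~~ z) = xor8 (letter x y z) (mask 0).
Proof. by apply: val_inj; rewrite /= xor8_inordE // !letterE; case: x; case: y; case: z. Qed.

Lemma letterNab x y z : letter (~~ x) (~~ y) z = xor8 (letter x y z) (inord 6).
Proof. by apply: val_inj; rewrite /= xor8_inordE // !letterE; case: x; case: y; case: z. Qed.

Definition swap_ab (i : 'I_8) : 'I_8 := letter (bit 1 i) (bit 2 i) (bit 0 i).

Lemma swap_abE (i : 'I_8) : swap_ab i = (4 * bit 1 i + 2 * bit 2 i + bit 0 i)%N :> nat.
Proof. exact: letterE. Qed.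

Lemma swap_ab_letter x y z : swap_ab (letter x y z) = letter y x z.
Proof. by rewrite /swap_ab bit2_letter bit1_letter bit0_letter. Qed.

Lemma swap_abK : involutive swap_ab.
Proof. by move=> i; rewrite [swap_ab i]/swap_ab swap_ab_letter letter_bits. Qed.

Definition flip_mx (t : 'I_8) : 'M[rat]_8 := invol_mx rat (xor8K t).

Definition swap_mx : 'M[rat]_8 := invol_mx rat swap_abK.

Definition clear_mx (j : nat) : 'M[rat]_8 := proj_mx rat (fun i : 'I_8 => ~~ bit j i).

Definition a0n (k i j : nat) : nat := nth 0 (nth [::] A0rows (Nat.lxor i k)) (Nat.lxor j k).

Lemma AmatE k i j : Amat k i j = (a0n k i j)%:R / 4.
Proof. by rewrite !mxE !xor8E. Qed.

Lemma Amat_xor k t : Amat (xor8 k t) = flip_mx t *m Amat k *m flip_mx t.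
Proof.
apply: invol_mx_conj => i j; rewrite !AmatE !xor8E /a0n !PeanoNat.Nat.lxor_assoc.
by rewrite (PeanoNat.Nat.lxor_comm t k).
Qed.

Lemma Amat_swap k : Amat (swap_ab k) = swap_mx *m Amat k *m swap_mx.
Proof.
apply: invol_mx_conj => i j; rewrite !AmatE !swap_abE; congr (_%:R / 4); apply/eqP.
by move: k i j; apply: (@all8P3 (fun k i j => a0n (4 * bit 1 k + 2 * bit 2 k + bit 0 k) i j ==
  a0n k (4 * bit 1 i + 2 * bit 2 i + bit 0 i) (4 * bit 1 j + 2 * bit 2 j + bit 0 j))%N).
Qed.

Lemma Amat_clear j (k : 'I_8) : (j < 3)%N -> ~~ bit j k ->
  clear_mx j *m Amat k *m clear_mx j = Amat k *m clear_mx j.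
Proof.
move=> lt_j3 kj; apply: proj_mx_stable => i l /negPn ij lj.
have check : all8 (fun k => all8 (fun i => all8 (fun l =>
    ~~ bit j k ==> bit j i ==> ~~ bit j l ==> (a0n k i l == 0)%N))).
  by case: j {kj ij lj} lt_j3 => [|[|[|]]].
have := all8P3 check k i l; rewrite /= kj ij lj => /eqP a0.
by rewrite AmatE a0 mul0r.
Qed.

Lemma Amat_sym j (k : 'I_8) : (j < 3)%N -> bit j k ->
  flip_mx (mask j) *m Amat k *m clear_mx j = Amat k *m clear_mx j.
Proof.
move=> lt_j3 kj; apply: invol_proj_mx => i l lj.
have lt_mask8 : (2 ^ j < 8)%N by case: j {kj lj} lt_j3 => [|[|[|]]].
have check : all8 (fun k => all8 (fun i => all8 (fun l =>
    bit j k ==> ~~ bit j l ==> (a0n k (Nat.lxor i (2 ^ j)) l == a0n k i l)))).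
  by case: j {kj lj lt_mask8} lt_j3 => [|[|[|]]].
have := all8P3 check k i l; rewrite /= kj lj => /eqP a0.
by rewrite !AmatE xor8_inordE // a0.
Qed.

Lemma clear_mx_e0 j : clear_mx j *m e0T = e0T.
Proof.
apply: proj_mx_col => i /negPn ij; rewrite mxE ifN //.
by apply: contraTneq ij => ->; rewrite /bit div0n.
Qed.

Lemma swap_mx_e0 : swap_mx *m e0T = e0T.
Proof.
apply: invol_mx_col => i; rewrite !mxE swap_abE.
have check : all8 (fun i => (4 * bit 1 i + 2 * bit 2 i + bit 0 i == 0) == (i == 0))%N by [].
by rewrite (eqP (all8P check i)).
Qed.

Lemma rowvec_invol (f : 'I_8 -> 'I_8) (fK : involutive f) (fn : nat -> nat) s s' :
  (forall i, f i = fn i :> nat) -> all8 (fun j => nth 0 s' j == nth 0 s (fn j))%N ->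
  rowvec s *m invol_mx rat fK = rowvec s'.
Proof.
move=> fE /all8P check; apply: row_invol_mx => j.
by rewrite !mxE fE (eqP (check j)).
Qed.

Lemma rowvec_flip s s' t : (t < 8)%N ->
  all8 (fun j => nth 0 s' j == nth 0 s (Nat.lxor j t))%N ->
  rowvec s *m flip_mx (inord t) = rowvec s'.
Proof. by move=> lt_t8; apply: rowvec_invol (xor8_inordE lt_t8). Qed.

Lemma rowvec_swap s :
  all8 (fun j => nth 0 s j == nth 0 s (4 * bit 1 j + 2 * bit 2 j + bit 0 j))%N ->
  rowvec s *m swap_mx = rowvec s.
Proof. exact: rowvec_invol swap_abE. Qed.

Lemma rowvec_clear j s : all8 (fun i => ~~ bit j i ==> (nth 0 s i == 0))%N ->
  rowvec s *m clear_mx j = 0.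
Proof.
move=> /all8P check; apply: row_proj_mx => i ij.
by have := check i; rewrite ij /= mxE => /eqP ->.
Qed.

Lemma sum_ord8 (F : nat -> nat) : (\sum_(l < 8) F l)%N = sumn (map F (iota 0 8)).
Proof. by rewrite sumnE big_map -(big_mkord xpredT) /index_iota subn0. Qed.

Lemma rowvec_Amat s (k : 'I_8) j :
  (rowvec s *m Amat k) 0 j = (sumn [seq nth 0 s l * a0n k l j | l <- iota 0 8])%:R / 4.
Proof.
rewrite mxE -sum_ord8 natr_sum mulr_suml; apply: eq_bigr => l _.
by rewrite [rowvec s 0 l]mxE AmatE natrM mulrA.
Qed.

Lemma rowvec_Amat_xor s t : (t < 8)%N ->
  all8 (fun k => all8 (fun j => sumn [seq nth 0 s l * a0n (Nat.lxor k t) l j | l <- iota 0 8]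
                            == sumn [seq nth 0 s l * a0n k l j | l <- iota 0 8]))%N ->
  forall k, rowvec s *m Amat (xor8 k (inord t)) = rowvec s *m Amat k.
Proof.
move=> lt_t8 /all8P2 check k; apply/rowP => j.
by rewrite !rowvec_Amat xor8_inordE // (eqP (check k j)).
Qed.

Lemma Lc_flip_alpha c : Lc c *m flip_mx (mask 2) = Lc c.
Proof. by case: c; apply: rowvec_flip. Qed.

Lemma Lc_flip_beta c : Lc c *m flip_mx (mask 1) = Lc c.
Proof. by case: c; apply: rowvec_flip. Qed.

Lemma Lc_flip_gamma c : Lc c *m flip_mx (mask 0) = Lc (~~ c).
Proof. by case: c; apply: rowvec_flip. Qed.

Lemma Lc_swap c : Lc c *m swap_mx = Lc c.
Proof. by case: c; apply: rowvec_swap. Qed.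

Lemma Lc_Amat_xor6 c k : Lc c *m Amat (xor8 k (inord 6)) = Lc c *m Amat k.
Proof. by case: c; apply: rowvec_Amat_xor. Qed.

Lemma Lc_clear_gamma : Lc true *m clear_mx 0 = 0.
Proof. exact: rowvec_clear. Qed.

Lemma Lab_flip_alpha a b : Lab a b *m flip_mx (mask 2) = Lab (~~ a) b.
Proof. by case: a; case: b; apply: rowvec_flip. Qed.

Lemma Lab_flip_beta a b : Lab a b *m flip_mx (mask 1) = Lab a (~~ b).
Proof. by case: a; case: b; apply: rowvec_flip. Qed.

Lemma Lab_flip_gamma a b : Lab a b *m flip_mx (mask 0) = Lab a b.
Proof. by case: a; case: b; apply: rowvec_flip. Qed.

Lemma Lab_clear_alpha b : Lab true b *m clear_mx 2 = 0.
Proof. by case: b; apply: rowvec_clear. Qed.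

Lemma Lab_clear_beta a : Lab a true *m clear_mx 1 = 0.
Proof. by case: a; apply: rowvec_clear. Qed.

Definition word n x y z : 'M[rat]_8 :=
  word_of n (fun m => Amat (letter (bit m x) (bit m y) (bit m z))).

Section Coordinate.

Variables (j : nat) (G : nat -> bool -> 'I_8).
Hypothesis lt_j3 : (j < 3)%N.
Hypothesis G_flip : forall m b, G m (~~ b) = xor8 (G m b) (mask j).
Hypothesis G_bit : forall m b, bit j (G m b) = b.

Lemma coord_word_opp n x x' : ((x + x') %% 2 ^ n = 0)%N -> (x %% 2 ^ n != 0)%N ->
  bit_word (fun m b => Amat (G m b)) n x' *m e0T =
  flip_mx (mask j) *m (bit_word (fun m b => Amat (G m b)) n x *m e0T).
Proof.
apply: (bit_word_opp (D := clear_mx j)).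
- exact: invol_mxK.
- exact: clear_mx_e0.
- by move=> m b; rewrite G_flip Amat_xor.
- by move=> m; rewrite Amat_clear ?G_bit.
- by move=> m; rewrite Amat_sym ?G_bit.
Qed.

Lemma coord_word_clear n x : (x %% 2 ^ n = 0)%N ->
  clear_mx j *m (bit_word (fun m b => Amat (G m b)) n x *m e0T) =
  bit_word (fun m b => Amat (G m b)) n x *m e0T.
Proof.
apply: bit_word_clear; first exact: clear_mx_e0.
by move=> m; rewrite Amat_clear ?G_bit.
Qed.

End Coordinate.

Lemma zopp_addn n (x : 'I_(2 ^ n)) : ((x + zopp x) %% 2 ^ n = 0)%N.
Proof. by rewrite /= modnDmr subnKC ?modnn // ltnW. Qed.

Lemma modn_ord_neq0 n (x : 'I_(2 ^ n)) : x != zero n -> (x %% 2 ^ n != 0)%N.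
Proof.
rewrite modn_small //; apply: contra => /eqP x0.
by apply/eqP/val_inj; rewrite /= x0 mod0n.
Qed.

Lemma zopp_zero n : zopp (zero n) = zero n.
Proof. by apply: val_inj; rewrite /= !mod0n subn0 modnn. Qed.

Lemma zero_modn n : (zero n %% 2 ^ n = 0)%N.
Proof. by rewrite /= !mod0n. Qed.

Lemma word_zopp_alpha n (x : 'I_(2 ^ n)) y z : x != zero n ->
  word n (zopp x) y z *m e0T = flip_mx (mask 2) *m (word n x y z *m e0T).
Proof.
move=> x_neq0; apply: (@coord_word_opp 2 (fun m b => letter b (bit m y) (bit m z))) => //.
- by move=> m b; apply: letterNa.
- by move=> m b; apply: bit2_letter.
- exact: zopp_addn.
- exact: modn_ord_neq0.
Qed.

Lemma word_zopp_beta n x (y : 'I_(2 ^ n)) z : y != zero n ->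
  word n x (zopp y) z *m e0T = flip_mx (mask 1) *m (word n x y z *m e0T).
Proof.
move=> y_neq0; apply: (@coord_word_opp 1 (fun m b => letter (bit m x) b (bit m z))) => //.
- by move=> m b; apply: letterNb.
- by move=> m b; apply: bit1_letter.
- exact: zopp_addn.
- exact: modn_ord_neq0.
Qed.

Lemma word_zopp_gamma n x y (z : 'I_(2 ^ n)) : z != zero n ->
  word n x y (zopp z) *m e0T = flip_mx (mask 0) *m (word n x y z *m e0T).
Proof.
move=> z_neq0; apply: (@coord_word_opp 0 (fun m b => letter (bit m x) (bit m y) b)) => //.
- by move=> m b; apply: letterNg.
- by move=> m b; apply: bit0_letter.
- exact: zopp_addn.
- exact: modn_ord_neq0.
Qed.

Lemma word_clear_alpha n y z :
  clear_mx 2 *m (word n (zero n) y z *m e0T) = word n (zero n) y z *m e0T.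
Proof.
apply: (@coord_word_clear 2 (fun m b => letter b (bit m y) (bit m z))) => //.
- by move=> m b; apply: bit2_letter.
- exact: zero_modn.
Qed.

Lemma word_clear_beta n x z :
  clear_mx 1 *m (word n x (zero n) z *m e0T) = word n x (zero n) z *m e0T.
Proof.
apply: (@coord_word_clear 1 (fun m b => letter (bit m x) b (bit m z))) => //.
- by move=> m b; apply: bit1_letter.
- exact: zero_modn.
Qed.

Lemma word_clear_gamma n x y :
  clear_mx 0 *m (word n x y (zero n) *m e0T) = word n x y (zero n) *m e0T.
Proof.
apply: (@coord_word_clear 0 (fun m b => letter (bit m x) (bit m y) b)) => //.
- by move=> m b; apply: bit0_letter.
- exact: zero_modn.
Qed.

Lemma word_swap n x y z : word n y x z = swap_mx *m word n x y z *m swap_mx.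
Proof.
rewrite -word_of_conj ?invol_mxK //; apply: eq_word_of => m _.
by rewrite -Amat_swap swap_ab_letter.
Qed.

Lemma bit_add_msb x k m : (k <= m)%N ->
  bit k ((x + 2 ^ m %% 2 ^ m.+1) %% 2 ^ m.+1) = (k == m) (+) bit k x.
Proof.
move=> le_km; rewrite bit_modn ?ltnS // modn_small ?ltn_exp2l //.
exact: bit_addn_pow.
Qed.

Lemma word_add_msb m x y z :
  word m.+1 ((x + 2 ^ m %% 2 ^ m.+1) %% 2 ^ m.+1) ((y + 2 ^ m %% 2 ^ m.+1) %% 2 ^ m.+1) z =
  Amat (xor8 (letter (bit m x) (bit m y) (bit m z)) (inord 6)) *m word m x y z.
Proof.
rewrite /word word_ofS (bit_add_msb x (leqnn m)) (bit_add_msb y (leqnn m)) eqxx.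
rewrite -letterNab; congr (_ *m _); apply: eq_word_of => k lt_km.
by rewrite (bit_add_msb x (ltnW lt_km)) (bit_add_msb y (ltnW lt_km)) (ltn_eqF lt_km).
Qed.

Lemma cadpE n c (al be ga : 'I_(2 ^ n)) :
  cadp c al be ga = (Lc c *m (word n al be ga *m e0T)) 0 0.
Proof. by rewrite /cadp mulmxA. Qed.

Lemma padpE n a b (al be ga : 'I_(2 ^ n)) :
  padp a b al be ga = (Lab a b *m (word n al be ga *m e0T)) 0 0.
Proof. by rewrite /padp mulmxA. Qed.

Lemma cadpC n c (al be ga : 'I_(2 ^ n)) : cadp c be al ga = cadp c al be ga.
Proof. by rewrite !cadpE word_swap -!mulmxA swap_mx_e0 !mulmxA Lc_swap. Qed.

Lemma cadp_add_msb n c (al be ga : 'I_(2 ^ n)) :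
  cadp c (zadd al (zmod n (2 ^ n.-1))) (zadd be (zmod n (2 ^ n.-1))) ga = cadp c al be ga.
Proof.
rewrite !cadpE; case: n al be ga => [|m] al be ga; first by rewrite /word !word_of0.
by rewrite word_add_msb /word word_ofS !mulmxA Lc_Amat_xor6.
Qed.

Lemma cadpNa n c (al be ga : 'I_(2 ^ n)) : cadp c (zopp al) be ga = cadp c al be ga.
Proof.
have [->|al_neq0] := eqVneq al (zero n); first by rewrite zopp_zero.
by rewrite !cadpE word_zopp_alpha // mulmxA Lc_flip_alpha.
Qed.

Lemma cadpNb n c (al be ga : 'I_(2 ^ n)) : cadp c al (zopp be) ga = cadp c al be ga.
Proof.
have [->|be_neq0] := eqVneq be (zero n); first by rewrite zopp_zero.
by rewrite !cadpE word_zopp_beta // mulmxA Lc_flip_beta.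
Qed.

Lemma cadpNg n c (al be ga : 'I_(2 ^ n)) : ga != zero n ->
  cadp (~~ c) al be (zopp ga) = cadp c al be ga.
Proof. by move=> ga_neq0; rewrite !cadpE word_zopp_gamma // mulmxA Lc_flip_gamma negbK. Qed.

Lemma padpNa n a b (al be ga : 'I_(2 ^ n)) : al != zero n ->
  padp a b (zopp al) be ga = padp (~~ a) b al be ga.
Proof. by move=> al_neq0; rewrite !padpE word_zopp_alpha // mulmxA Lab_flip_alpha. Qed.

Lemma padpNb n a b (al be ga : 'I_(2 ^ n)) : be != zero n ->
  padp a b al (zopp be) ga = padp a (~~ b) al be ga.
Proof. by move=> be_neq0; rewrite !padpE word_zopp_beta // mulmxA Lab_flip_beta. Qed.

Lemma padpNg n a b (al be ga : 'I_(2 ^ n)) : padp a b al be (zopp ga) = padp a b al be ga.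
Proof.
have [->|ga_neq0] := eqVneq ga (zero n); first by rewrite zopp_zero.
by rewrite !padpE word_zopp_gamma // mulmxA Lab_flip_gamma.
Qed.

Lemma padp_alpha0 n b (be ga : 'I_(2 ^ n)) : padp true b (zero n) be ga = 0.
Proof. by rewrite padpE -word_clear_alpha mulmxA Lab_clear_alpha mul0mx mxE. Qed.

Lemma padp_beta0 n a (al ga : 'I_(2 ^ n)) : padp a true al (zero n) ga = 0.
Proof. by rewrite padpE -word_clear_beta mulmxA Lab_clear_beta mul0mx mxE. Qed.

Lemma cadp_gamma0 n (al be : 'I_(2 ^ n)) : cadp true al be (zero n) = 0.
Proof. by rewrite cadpE -word_clear_gamma mulmxA Lc_clear_gamma mul0mx mxE. Qed.

Theorem theorem4 (n : nat) (al be ga : 'I_(2 ^ n)) (a b c : bool) :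
  (* (1) *)
  (cadp c al be ga = cadp c be al ga /\
   cadp c be al ga =
     cadp c (zadd al (zmod n (2 ^ n.-1))) (zadd be (zmod n (2 ^ n.-1))) ga) /\
  (* (2) *)
  (cadp c al be ga = cadp c (zopp al) be ga /\
   cadp c (zopp al) be ga = cadp c al (zopp be) ga) /\
  (* (3) *)
  (ga != zero n -> cadp c al be ga = cadp (~~ c) al be (zopp ga)) /\
  (* (4) *)
  padp a b al be ga = padp a b al be (zopp ga) /\
  (* (5) *)
  (al != zero n -> padp a b (zopp al) be ga = padp (~~ a) b al be ga) /\
  (* (6) *)
  (be != zero n -> padp a b al (zopp be) ga = padp a (~~ b) al be ga) /\
  (* (7) *)
  (padp true b (zero n) be ga = padp a true al (zero n) ga /\
   padp a true al (zero n) ga = cadp true al be (zero n) /\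
   cadp true al be (zero n) = 0).
Proof.
split; first by rewrite cadp_add_msb cadpC.
split; first by rewrite cadpNa cadpNb.
split; first by move=> ga_neq0; rewrite cadpNg.
split; first by rewrite padpNg.
split; first exact: padpNa.
split; first exact: padpNb.
by rewrite padp_alpha0 padp_beta0 cadp_gamma0.
Qed.
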